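(* Let $(X,d)$ be a compact metric space, $f_{1,\infty}$ an $m$-periodic sequence of continuous surjective self-maps of $X$, and $g=f_m\circ\cdots\circ f_1$. If the autonomous system $(X,g)$ is topologically transitive and has a dense set of periodic points, then $(X,f_{1,\infty})$ is Devaney chaotic.
   Context: $m$-periodic: $f_{n+m}=f_n$ for all $n$. Write $f_1^n=f_n\circ\cdots\circ f_1$. For the non-autonomous system: topologically transitive means for all non-empty open $U,V$ some $n$ with $f_1^n(U)\cap V\ne\emptyset$; a point $x$ is periodic if there is $n$ with $f_1^{nk}(x)=x$ for all $k\in\mathbb{N}$; sensitive means there is $\delta>0$ such that for every $x$ and neighbourhood $U$ of $x$ there exist $y\in U$, $n$ with $d(f_1^n(x),f_1^n(y))>\delta$; Devaney chaotic means topologically transitive, dense periodic points, and sensitive. For the autonomous system $(X,g)$ these notions are the usual ones with $g^n$ in place of $f_1^n$. *)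

From Stdlib Require Import Reals List.
Open Scope R_scope.

Record MetricSpace := {
  carrier :> Type;
  dist : carrier -> carrier -> R;
  dist_nonneg : forall x y, 0 <= dist x y;
  dist_eq0 : forall x y, dist x y = 0 <-> x = y;
  dist_sym : forall x y, dist x y = dist y x;
  dist_tri : forall x y z, dist x z <= dist x y + dist y z
}.

Section Defs.
Variable X : MetricSpace.

Definition is_open (U : X -> Prop) : Prop :=
  forall x, U x -> exists e, 0 < e /\ forall y, dist X x y < e -> U y.

Definition nonempty (U : X -> Prop) : Prop := exists x, U x.

Definition compact_space : Prop :=
  forall (I : Type) (U : I -> X -> Prop),
    (forall i, is_open (U i)) -> (forall x, exists i, U i x) ->
    exists l : list I, forall x, exists i, In i l /\ U i x.

Definition infinite_space : Prop := ~ exists l : list X, forall x, In x l.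

Definition continuous (g : X -> X) : Prop :=
  forall x e, 0 < e -> exists dl, 0 < dl /\
    forall y, dist X x y < dl -> dist X (g x) (g y) < e.

Definition surjective (g : X -> X) : Prop := forall y, exists x, g x = y.

Definition dense (A : X -> Prop) : Prop :=
  forall U, is_open U -> nonempty U -> exists x, U x /\ A x.

(* A non-autonomous system is f : nat -> X -> X, where f n is f_n for n >= 1
   (the value f 0 is never used). *)
Fixpoint ncomp (f : nat -> X -> X) (n : nat) : X -> X :=
  match n with
  | O => fun x => x
  | S k => fun x => f (S k) (ncomp f k x)
  end.

Definition periodic_seq (f : nat -> X -> X) (m : nat) : Prop :=
  forall n, (1 <= n)%nat -> f (n + m)%nat = f n.

Definition transitive (f : nat -> X -> X) : Prop :=
  forall U V, is_open U -> is_open V -> nonempty U -> nonempty V ->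
    exists n, (1 <= n)%nat /\ exists x, U x /\ V (ncomp f n x).

Definition periodic_point (f : nat -> X -> X) (x : X) : Prop :=
  exists n, (1 <= n)%nat /\ forall k, ncomp f (n * k) x = x.

Definition sensitive (f : nat -> X -> X) : Prop :=
  exists delta, 0 < delta /\
    forall x U, is_open U -> U x ->
      exists y n, U y /\ (1 <= n)%nat /\
        dist X (ncomp f n x) (ncomp f n y) > delta.

Definition devaney_chaotic (f : nat -> X -> X) : Prop :=
  transitive f /\ dense (periodic_point f) /\ sensitive f.

Definition autonomous (g : X -> X) : nat -> X -> X := fun _ => g.

End Defs.

(* Periodicity gives f_1^(k m) = g^k, so transitivity, periodic points and
   sensitivity of (X, g) are inherited by the non-autonomous system along the
   times k m.  Sensitivity of g is the theorem of Banks, Brooks, Cairns, Davis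
   and Stacey: dense periodic points in an infinite space yield two periodic
   orbits of g at positive distance 8 delta, so every point x is 4 delta-far
   from some periodic orbit.
   Near x lie a periodic point p of period n and, by transitivity, a point y
   whose orbit shadows that far orbit for n steps; at the next multiple of n
   the point p has returned next to x while g^(n j) y is 2 delta-far from p, so
   g^(n j) x is delta-far from one of them. *)
From Pilot Require Import Defs.
From Stdlib Require Import Reals List Lra Lia Classical.
Open Scope R_scope.

Section Dynamics.
Variable M : MetricSpace.
Local Notation dist := (Defs.dist M).

Lemma ncomp_autonomous (g : M -> M) n x :
  ncomp M (autonomous M g) n x = Nat.iter n g x.
Proof. induction n as [|n IH]; simpl; [reflexivity | now rewrite IH]. Qed.

Lemma ncomp_ext (f1 f2 : nat -> M -> M) n x :
  (forall i, (1 <= i)%nat -> f1 i = f2 i) -> ncomp M f1 n x = ncomp M f2 n x.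
Proof.
  intros Hf; induction n as [|n IH]; simpl; [reflexivity|].
  rewrite IH, Hf by lia; reflexivity.
Qed.

Lemma ncomp_add (f : nat -> M -> M) a b x :
  ncomp M f (a + b) x = ncomp M (fun i => f (a + i)%nat) b (ncomp M f a x).
Proof.
  induction b as [|b IH]; simpl.
  - now rewrite Nat.add_0_r.
  - rewrite <- plus_n_Sm; simpl; now rewrite IH.
Qed.

Lemma periodic_seq_shift (f : nat -> M -> M) m :
  periodic_seq M f m -> forall j i, (1 <= i)%nat -> f (i + j * m)%nat = f i.
Proof.
  intros Hper j; induction j as [|j IH]; intros i Hi.
  - now rewrite Nat.add_0_r.
  - replace (i + S j * m)%nat with (i + j * m + m)%nat by lia.
    rewrite Hper by lia; now apply IH.
Qed.

Lemma continuous_id : continuous M (fun x => x).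
Proof. intros x e He; exists e; auto. Qed.

Lemma continuous_comp (h1 h2 : M -> M) :
  continuous M h1 -> continuous M h2 -> continuous M (fun x => h2 (h1 x)).
Proof.
  intros C1 C2 x e He.
  destruct (C2 (h1 x) e He) as [d2 [Hd2 P2]].
  destruct (C1 x d2 Hd2) as [d1 [Hd1 P1]].
  exists d1; auto.
Qed.

Lemma continuous_ncomp (f : nat -> M -> M) :
  (forall n, (1 <= n)%nat -> continuous M (f n)) -> forall n, continuous M (ncomp M f n).
Proof.
  intros Hf n; induction n as [|n IH]; [apply continuous_id|].
  apply (continuous_comp _ (f (S n))); [exact IH | apply Hf; lia].
Qed.

Lemma continuous_iter (g : M -> M) n : continuous M g -> continuous M (Nat.iter n g).
Proof.
  intros Hg; induction n as [|n IH]; [apply continuous_id|].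
  exact (continuous_comp _ g IH Hg).
Qed.

Lemma dist_self (x : M) : dist x x = 0.
Proof. now apply Defs.dist_eq0. Qed.

Lemma dist_pos (x y : M) : x <> y -> 0 < dist x y.
Proof.
  intros Hxy; destruct (Defs.dist_nonneg M x y) as [H|H]; [exact H|].
  now apply eq_sym, Defs.dist_eq0 in H.
Qed.

Lemma is_open_ball (z : M) r : is_open M (fun w => dist z w < r).
Proof.
  intros w Hw; exists (r - dist z w); split; [lra|].
  intros y Hy; pose proof (Defs.dist_tri M z w y); lra.
Qed.

Lemma is_open_preimage (h : M -> M) U :
  continuous M h -> is_open M U -> is_open M (fun w => U (h w)).
Proof.
  intros Hh HU w Uw.
  destruct (HU (h w) Uw) as [e [He Pe]].
  destruct (Hh w e He) as [r [Hr Pr]].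
  exists r; auto.
Qed.

Lemma is_open_forall_le (U : nat -> M -> Prop) n :
  (forall i, (i <= n)%nat -> is_open M (U i)) ->
  is_open M (fun w => forall i, (i <= n)%nat -> U i w).
Proof.
  induction n as [|n IH]; intros HU w Uw.
  - destruct (HU 0%nat (le_n _) w (Uw 0%nat (le_n _))) as [e [He Pe]].
    exists e; split; [exact He|].
    intros y Hy i Hi; replace i with 0%nat by lia; auto.
  - destruct (IH (fun i Hi => HU i (le_S _ _ Hi)) w (fun i Hi => Uw i (le_S _ _ Hi)))
      as [e1 [He1 P1]].
    destruct (HU (S n) (le_n _) w (Uw _ (le_n _))) as [e2 [He2 P2]].
    exists (Rmin e1 e2); split; [now apply Rmin_pos|].
    intros y Hy i Hi.
    pose proof (Rmin_l e1 e2); pose proof (Rmin_r e1 e2).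
    destruct (Nat.eq_dec i (S n)) as [->|Hne].
    + apply P2; lra.
    + apply P1; [lra | lia].
Qed.

Lemma list_pos_min {A : Type} (l : list A) (a : A -> R) :
  (forall u, In u l -> 0 < a u) -> exists e, 0 < e /\ forall u, In u l -> e <= a u.
Proof.
  induction l as [|u0 l IH]; intros Hpos.
  - exists 1; split; [lra | intros u []].
  - destruct IH as [e [He Pe]]; [intros u Hu; apply Hpos; now right|].
    exists (Rmin e (a u0)); split; [apply Rmin_pos; auto; apply Hpos; now left|].
    intros u [<-|Hu]; [apply Rmin_r|].
    eapply Rle_trans; [apply Rmin_l | auto].
Qed.

Lemma infinite_space_not_in : infinite_space M -> forall l : list M, exists z, ~ In z l.
Proof.
  intros Hinf l; apply not_all_ex_not; intros Hall.
  apply Hinf; now exists l.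
Qed.

Definition has_period (g : M -> M) (N : nat) (q : M) : Prop :=
  (1 <= N)%nat /\ Nat.iter N g q = q.

Definition orbit (g : M -> M) (N : nat) (q : M) : list M :=
  map (fun i => Nat.iter i g q) (seq 0 N).

Section PeriodicOrbits.
Variable g : M -> M.

Lemma iter_period_mul N q k : Nat.iter N g q = q -> Nat.iter (N * k) g q = q.
Proof.
  intros Hq; induction k as [|k IH]; [now rewrite Nat.mul_0_r|].
  now rewrite Nat.mul_succ_r, Nat.add_comm, Nat.iter_add, IH, Hq.
Qed.

Lemma has_period_of_periodic_point q :
  periodic_point M (autonomous M g) q -> exists N, has_period g N q.
Proof.
  intros [N [HN Hq]]; exists N; split; [exact HN|].
  rewrite <- ncomp_autonomous, <- (Nat.mul_1_r N); apply Hq.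
Qed.

Lemma iter_in_orbit N q : has_period g N q -> forall t, In (Nat.iter t g q) (orbit g N q).
Proof.
  intros [HN Hq] t.
  rewrite (Nat.div_mod_eq t N), Nat.add_comm, Nat.iter_add, (iter_period_mul N q _ Hq).
  apply (in_map (fun i => Nat.iter i g q)), in_seq; pose proof (Nat.mod_upper_bound t N); lia.
Qed.

Lemma periodic_return N q :
  has_period g N q -> forall s, exists u, Nat.iter u g (Nat.iter s g q) = q.
Proof.
  intros [HN Hq] s; exists (N * s - s)%nat.
  rewrite <- Nat.iter_add; rewrite <- (iter_period_mul N q s Hq) at 2.
  f_equal; nia.
Qed.

Lemma periodic_point_near :
  dense M (periodic_point M (autonomous M g)) ->
  forall z r, 0 < r -> exists q N, has_period g N q /\ dist z q < r.
Proof.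
  intros Hdense z r Hr.
  destruct (Hdense (fun w => dist z w < r)) as [q [Hzq Hq]].
  - apply is_open_ball.
  - exists z; now rewrite dist_self.
  - destruct (has_period_of_periodic_point q Hq) as [N HN]; now exists q, N.
Qed.

Lemma separated_periodic_orbits :
  infinite_space M -> dense M (periodic_point M (autonomous M g)) ->
  exists q1 N1 q2 N2 d0, has_period g N1 q1 /\ has_period g N2 q2 /\ 0 < d0 /\
    forall t s, d0 <= dist (Nat.iter t g q1) (Nat.iter s g q2).
Proof.
  intros Hinf Hdense.
  destruct (infinite_space_not_in Hinf nil) as [z0 _].
  destruct (periodic_point_near Hdense z0 1 Rlt_0_1) as [q1 [N1 [HN1 _]]].
  destruct (infinite_space_not_in Hinf (orbit g N1 q1)) as [z Hz].
  destruct (list_pos_min (orbit g N1 q1) (dist z)) as [r [Hr Pr]].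
  { intros u Hu; apply dist_pos; intros ->; contradiction. }
  destruct (periodic_point_near Hdense z r Hr) as [q2 [N2 [HN2 Hzq2]]].
  assert (Hdisjoint : forall t s, Nat.iter t g q1 <> Nat.iter s g q2).
  { intros t s E.
    destruct (periodic_return N2 q2 HN2 s) as [u Hu].
    rewrite <- E, <- Nat.iter_add in Hu.
    pose proof (iter_in_orbit N1 q1 HN1 (u + t)) as Hin; rewrite Hu in Hin.
    pose proof (Pr q2 Hin); lra. }
  destruct (list_pos_min (list_prod (orbit g N1 q1) (orbit g N2 q2))
              (fun uv => dist (fst uv) (snd uv))) as [d0 [Hd0 P0]].
  { intros [u v] [Hu Hv]%in_prod_iff.
    apply in_map_iff in Hu as [t [<- _]]; apply in_map_iff in Hv as [s [<- _]].
    apply dist_pos, Hdisjoint. }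
  exists q1, N1, q2, N2, d0; do 3 (split; [assumption|]).
  intros t s; apply (P0 (_, _)), in_prod; now apply iter_in_orbit.
Qed.

Lemma far_orbits :
  infinite_space M -> dense M (periodic_point M (autonomous M g)) ->
  exists delta, 0 < delta /\ forall x, exists q, forall t, 4 * delta <= dist x (Nat.iter t g q).
Proof.
  intros Hinf Hdense.
  destruct (separated_periodic_orbits Hinf Hdense)
    as [q1 [N1 [q2 [N2 [d0 [HN1 [HN2 [Hd0 Hsep]]]]]]]].
  exists (d0 / 8); split; [lra|]; intros x.
  destruct (classic (forall t, 4 * (d0 / 8) <= dist x (Nat.iter t g q1))) as [H1|H1];
    [now exists q1|].
  destruct (classic (forall s, 4 * (d0 / 8) <= dist x (Nat.iter s g q2))) as [H2|H2];
    [now exists q2|].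
  apply not_all_ex_not in H1 as [t H1%Rnot_le_lt].
  apply not_all_ex_not in H2 as [s H2%Rnot_le_lt].
  pose proof (Hsep t s); pose proof (Defs.dist_tri M (Nat.iter t g q1) x (Nat.iter s g q2)).
  rewrite Defs.dist_sym in H1; lra.
Qed.

Lemma next_multiple n k :
  (1 <= n)%nat -> exists j i, (1 <= n * j)%nat /\ (i <= n)%nat /\ (n * j = i + k)%nat.
Proof.
  intros Hn; exists (k / n + 1)%nat, (n * (k / n + 1) - k)%nat.
  pose proof (Nat.div_mod_eq k n); pose proof (Nat.mod_upper_bound k n).
  repeat split; nia.
Qed.

Lemma sensitive_of_far_orbits delta :
  continuous M g -> transitive M (autonomous M g) ->
  dense M (periodic_point M (autonomous M g)) -> 0 < delta ->
  (forall x, exists q, forall t, 4 * delta <= dist x (Nat.iter t g q)) ->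
  sensitive M (autonomous M g).
Proof.
  intros Hg Htrans Hdense Hdelta Hfar.
  exists delta; split; [exact Hdelta|]; intros x U HU Ux.
  setoid_rewrite ncomp_autonomous.
  destruct (HU x Ux) as [eU [HeU PU]].
  pose proof (Rmin_l delta eU); pose proof (Rmin_r delta eU).
  set (eps := Rmin delta eU) in *.
  assert (Heps : 0 < eps) by now apply Rmin_pos.
  destruct (Hfar x) as [q Hq].
  destruct (periodic_point_near Hdense x eps Heps) as [p [n [[Hn Hp] Hxp]]].
  set (shadow := fun w => forall i, (i <= n)%nat ->
                   dist (Nat.iter i g q) (Nat.iter i g w) < delta).
  assert (Hshadow : is_open M shadow).
  { apply is_open_forall_le; intros i _.
    apply (is_open_preimage (Nat.iter i g) (fun v => dist (Nat.iter i g q) v < delta)).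
    - now apply continuous_iter.
    - apply is_open_ball. }
  destruct (Htrans (fun w => dist x w < eps) shadow) as [k [_ [y [Hxy Hy]]]].
  - apply is_open_ball.
  - exact Hshadow.
  - exists x; now rewrite dist_self.
  - exists q; intros i _; now rewrite dist_self.
  - rewrite ncomp_autonomous in Hy.
    destruct (next_multiple n k Hn) as [j [i [Hj [Hi Hji]]]].
    assert (Hyq : dist (Nat.iter i g q) (Nat.iter (n * j) g y) < delta)
      by (rewrite Hji, Nat.iter_add; now apply Hy).
    assert (Hpy : 2 * delta < dist p (Nat.iter (n * j) g y)).
    { pose proof (Hq i); pose proof (Defs.dist_tri M x p (Nat.iter i g q)).
      pose proof (Defs.dist_tri M p (Nat.iter (n * j) g y) (Nat.iter i g q)).
      rewrite (Defs.dist_sym M (Nat.iter (n * j) g y)) in *; lra. }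
    pose proof (Defs.dist_tri M p (Nat.iter (n * j) g x) (Nat.iter (n * j) g y)).
    destruct (Rlt_or_le delta (dist (Nat.iter (n * j) g x) (Nat.iter (n * j) g y))).
    + exists y, (n * j)%nat; repeat split; auto; apply PU; lra.
    + exists p, (n * j)%nat; repeat split; [apply PU; lra | exact Hj|].
      rewrite (iter_period_mul n p j Hp), Defs.dist_sym; lra.
Qed.

Lemma sensitive_of_transitive_dense_periodic :
  continuous M g -> infinite_space M -> transitive M (autonomous M g) ->
  dense M (periodic_point M (autonomous M g)) -> sensitive M (autonomous M g).
Proof.
  intros Hg Hinf Htrans Hdense.
  destruct (far_orbits Hinf Hdense) as [delta [Hdelta Hfar]].
  exact (sensitive_of_far_orbits delta Hg Htrans Hdense Hdelta Hfar).
Qed.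

End PeriodicOrbits.

Section PeriodicSystem.
Variables (f : nat -> M -> M) (m : nat).
Hypotheses (Hm : (1 <= m)%nat) (Hper : periodic_seq M f m).

Let g := ncomp M f m.

Lemma ncomp_mul_period k x : ncomp M f (k * m) x = ncomp M (autonomous M g) k x.
Proof.
  induction k as [|k IH]; simpl; [reflexivity|].
  rewrite Nat.add_comm, ncomp_add, IH.
  apply ncomp_ext; intros i Hi.
  rewrite Nat.add_comm; now apply periodic_seq_shift.
Qed.

Lemma transitive_of_period_iterate :
  transitive M (autonomous M g) -> transitive M f.
Proof.
  intros Htrans U V HU HV NU NV.
  destruct (Htrans U V HU HV NU NV) as [n [Hn [x [Ux Vx]]]].
  exists (n * m)%nat; split; [nia|].
  exists x; now rewrite ncomp_mul_period.
Qed.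

Lemma periodic_point_of_period_iterate x :
  periodic_point M (autonomous M g) x -> periodic_point M f x.
Proof.
  intros [N [HN Hx]]; exists (N * m)%nat; split; [nia|]; intros k.
  replace (N * m * k)%nat with (N * k * m)%nat by ring.
  now rewrite ncomp_mul_period.
Qed.

Lemma dense_periodic_of_period_iterate :
  dense M (periodic_point M (autonomous M g)) -> dense M (periodic_point M f).
Proof.
  intros Hdense U HU NU.
  destruct (Hdense U HU NU) as [x [Ux Hx]].
  exists x; split; [exact Ux | now apply periodic_point_of_period_iterate].
Qed.

Lemma sensitive_of_period_iterate :
  sensitive M (autonomous M g) -> sensitive M f.
Proof.
  intros [delta [Hdelta Hsens]]; exists delta; split; [exact Hdelta|].
  intros x U HU Ux.
  destruct (Hsens x U HU Ux) as [y [n [Uy [Hn Hxy]]]].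
  exists y, (n * m)%nat; split; [exact Uy | split; [nia|]].
  now rewrite !ncomp_mul_period.
Qed.

End PeriodicSystem.

End Dynamics.

Theorem mainTheorem17 (M : MetricSpace) (f : nat -> M -> M) (m : nat) :
  compact_space M ->
  infinite_space M ->
  (1 <= m)%nat ->
  periodic_seq M f m ->
  (forall n, (1 <= n)%nat -> continuous M (f n)) ->
  (forall n, (1 <= n)%nat -> surjective M (f n)) ->
  transitive M (autonomous M (ncomp M f m)) ->
  dense M (periodic_point M (autonomous M (ncomp M f m))) ->
  devaney_chaotic M f.
Proof.
  intros _ Hinf Hm Hper Hcont _ Htrans Hdense.
  pose proof (continuous_ncomp M f Hcont m) as Hg.
  split; [|split].
  - exact (transitive_of_period_iterate M f m Hm Hper Htrans).
  - exact (dense_periodic_of_period_iterate M f m Hm Hper Hdense).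
  - apply (sensitive_of_period_iterate M f m Hm Hper).
    exact (sensitive_of_transitive_dense_periodic M _ Hg Hinf Htrans Hdense).
Qed.
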